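(* Let $Q=(V,E)$ be a natural join query over binary relations, and let $I$ be an instance in which every relation has at most $N\ge1$ tuples. Let $U\subset V$. Suppose: (1) for every attribute $Y\in V\setminus U$ there is a relation $R(X,Y)\in E$ with $X\in U$; (2) every relation $R(X,Y)\in E$ with $X\in U$ and $Y\in V\setminus U$ is light in $X$ in $I$. Let $T$ be the relation obtained by computing $Q_U(I)$ and then joining it with all relations $R(X,Y)^I$ with $X\in U$, $Y\in V\setminus U$. Equivalently, $T$ is the natural join of all relations of $I$ having at least one attribute in $U$. Then $|T|\le\mathrm{AGM}(Q)$.
   Context: A natural join query over binary relations consists of relation symbols, each having exactly two distinct attributes; relations are sets of tuples. The query graph $(V,E)$ has one vertex per attribute and one edge per relation. For a relation $R$ with attribute $X$ and a value $a$, the degree is $d_R(a)=|\{t\in R:t.X=a\}|$. $R$ is light in $X$ if $d_R(a)\le\sqrt N$ for all $a$. For $U\subseteq V$, the induced subgraph query $Q_U$ consists of the projections $\pi_U R$ of all relations $R$ having at least one attribute in $U$. A fractional vertex packing is a map $u:V\to[0,1]$ with $u_x+u_y\le1$ for every edge $\{x,y\}\in E$. Define $\mathrm{AGM}(Q)=\max_u N^{\sum_{x\in V}u_x}$, the maximum taken over fractional vertex packings $u$. *)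

From HB Require Import structures.
From mathcomp Require Import all_boot all_order all_algebra.
From mathcomp Require Import classical_sets reals exp.
Set Implicit Arguments. Unset Strict Implicit. Unset Printing Implicit Defensive.
Import Order.TTheory GRing.Theory Num.Theory.
Local Open Scope ring_scope.
Local Open Scope classical_set_scope.

(* A binary natural join query: attributes [V], relation symbols [Rel];
   relation [r] has the two attributes [src r] and [dst r].
   An instance [inst] assigns to each relation a finite set of tuples,
   a tuple of [r] being the pair (value of src r, value of dst r). *)

Definition degree (V D Rel : finType) (src dst : Rel -> V)
  (inst : Rel -> {set D * D}) (r : Rel) (X : V) (a : D) : nat :=
  if X == src r then #|[set t in inst r | t.1 == a]|
  else #|[set t in inst r | t.2 == a]|.

Definition light (R : realType) (V D Rel : finType) (src dst : Rel -> V)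
  (inst : Rel -> {set D * D}) (N : nat) (r : Rel) (X : V) : Prop :=
  forall a : D, ((degree src dst inst r X a)%:R : R) <= Num.sqrt (N%:R : R).

Definition touches (V Rel : finType) (src dst : Rel -> V) (U : {set V}) (r : Rel)
  : bool := (src r \in U) || (dst r \in U).

Definition joinAttrs (V Rel : finType) (src dst : Rel -> V) (U : {set V})
  : {set V} :=
  [set x | [exists r, touches src dst U r && ((x == src r) || (x == dst r))]].

(* T = natural join of all relations having at least one attribute in U.
   A tuple over the attribute set W = joinAttrs is represented as a partial
   map V -> option D whose domain is exactly W. *)
Definition joinT (V D Rel : finType) (src dst : Rel -> V)
  (inst : Rel -> {set D * D}) (U : {set V}) : {set {ffun V -> option D}} :=
  [set g : {ffun V -> option D} |
     [forall x, (g x != None) == (x \in joinAttrs src dst U)] &&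
     [forall r, touches src dst U r ==>
        [exists p in inst r, (g (src r) == Some p.1) && (g (dst r) == Some p.2)]]].

Definition vertex_packing (R : realType) (V Rel : finType) (src dst : Rel -> V)
  (u : V -> R) : Prop :=
  (forall x, 0 <= u x <= 1) /\ (forall r, u (src r) + u (dst r) <= 1).

(* AGM(Q) = max over fractional vertex packings u of N^(sum_x u_x),
   written as a supremum (the max is attained). *)
Definition AGM (R : realType) (V Rel : finType) (src dst : Rel -> V) (N : nat) : R :=
  sup [set y : R | exists u : V -> R,
         vertex_packing src dst u /\ y = (N%:R : R) `^ (\sum_(x : V) u x)].

From HB Require Import structures.
(* Imported before all_boot, so that classical_sets does not shadow finset's
   subsetP & co. *)
From mathcomp Require Import classical_sets reals exp.
From mathcomp Require Import all_boot all_order all_algebra.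
From mathcomp Require Import ring lra zify.
Set Implicit Arguments. Unset Strict Implicit. Unset Printing Implicit Defensive.
Import Order.TTheory GRing.Theory Num.Theory.

(* Let J be the set of attributes of the relations touching U, and consider the
   bipartite double cover of the query graph on J: (x, b) is adjacent to
   (y, ~~ b) whenever x and y are.  By the Koenig-Gallai theorem (derived from
   Hall's theorem) it has a stable set S and an edge cover F with |F| <= |S|.
   The stable set yields the half-integral vertex packing
   u_x = |S :&: {(x, false), (x, true)}| / 2, of total weight |S| / 2.
   The edge cover yields factors covering every attribute of J twice: an edge
   touching U contributes a relation between its endpoints (at most N tuples),
   an edge outside U contributes, at each endpoint y, a relation linking y to U
   (degree at most sqrt N in its U-attribute).  Eliminating the attributes one
   at a time, those of U first, with Cauchy-Schwarz at each step, gives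
   |T| <= N ^ (|F| / 2) <= N ^ (|S| / 2) <= AGM(Q). *)

Section Hall.
Variables (W : finType) (adj : rel W).
Implicit Types (L Rt X Y : {set W}) (h : W -> W).

Definition neighbours (Rt X : {set W}) : {set W} :=
  [set y in Rt | [exists x in X, adj x y]].

Definition matching (L Rt : {set W}) (h : W -> W) : Prop :=
  {in L, forall x, (h x \in Rt) && adj x (h x)} /\ {in L &, injective h}.

Definition hall_condition (L Rt : {set W}) : Prop :=
  forall X, X \subset L -> #|X| <= #|neighbours Rt X|.

Lemma neighbours_subset Rt X : neighbours Rt X \subset Rt.
Proof. by apply/subsetP => y; rewrite inE => /andP[]. Qed.

Lemma neighboursS Rt X Y : X \subset Y -> neighbours Rt X \subset neighbours Rt Y.
Proof.
move=> /subsetP sXY; apply/subsetP => y; rewrite !inE => /andP[-> /existsP[x /andP[xX axy]]].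
by apply/existsP; exists x; rewrite sXY.
Qed.

Lemma matching0 Rt : matching set0 Rt id.
Proof. by split=> [x|x y]; rewrite inE. Qed.

Lemma matching1 x y Rt : y \in neighbours Rt [set x] -> matching [set x] [set y] (fun=> y).
Proof.
rewrite !inE => /andP[_ /existsP[x' /andP[/[!inE] /eqP-> axy]]].
by split=> [z /[!inE] /eqP->|z z' /[!inE] /eqP-> /eqP->]; rewrite ?inE ?eqxx.
Qed.

Lemma matchingU (L1 L2 R1 : {set W}) Rt h1 h2 : R1 \subset Rt ->
  matching L1 R1 h1 -> matching L2 (Rt :\: R1) h2 ->
  matching (L1 :|: L2) Rt (fun x => if x \in L1 then h1 x else h2 x).
Proof.
move=> /subsetP sR1 [h1R h1inj] [h2R h2inj].
have h12 x y : x \in L1 -> y \in L2 -> h1 x != h2 y.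
  move=> xL1 yL2; have /andP[h1x _] := h1R x xL1.
  by have /andP[/[!inE] /andP[h2y _] _] := h2R y yL2; apply: contraNneq h2y => <-.
split=> [x|x y]; rewrite !inE.
  case: ifP => [xL1 _ | _ /= xL2]; first by have /andP[/sR1-> ->] := h1R x xL1.
  by have /andP[/[!inE] /andP[_ ->] ->] := h2R x xL2.
case: ifP => xL1; case: ifP => yL1 //= xL yL.
- exact: h1inj.
- by move=> eq_h; have := h12 x y xL1 yL; rewrite eq_h eqxx.
- by move=> eq_h; have := h12 y x yL1 xL; rewrite eq_h eqxx.
- exact: h2inj.
Qed.

Lemma hall_condition_tight L Rt X0 : hall_condition L Rt -> X0 \subset L ->
  #|neighbours Rt X0| <= #|X0| ->
  hall_condition X0 (neighbours Rt X0) /\ hall_condition (L :\: X0) (Rt :\: neighbours Rt X0).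
Proof.
move=> hallL sX0L tight; split=> X sX.
  apply: leq_trans (hallL X (subset_trans sX sX0L)) (subset_leq_card _).
  apply/subsetP => y yN; rewrite inE (subsetP (neighboursS Rt sX)) //.
  by move: yN; rewrite inE => /andP[].
have disjX : X :&: X0 = set0.
  by apply/setP => x; rewrite !inE; apply/andP => -[/(subsetP sX) /[!inE] /andP[/negPf->]].
have sXUX0 : X :|: X0 \subset L by rewrite subUset sX0L (subset_trans sX) ?subsetDl.
have hallXUX0 := hallL _ sXUX0.
have sNN : neighbours Rt (X :|: X0) :\: neighbours Rt X0 \subset
           neighbours (Rt :\: neighbours Rt X0) X.
  apply/subsetP => y; rewrite !inE => /andP[yNX0 /andP[yRt /existsP[x /andP[]]]].
  rewrite inE => /orP[xX axy | xX0 axy].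
    by rewrite yNX0 yRt; apply/existsP; exists x; rewrite xX.
  by move: yNX0; rewrite yRt; case/negP; apply/existsP; exists x; rewrite xX0.
have := cardsID (neighbours Rt X0) (neighbours Rt (X :|: X0)).
have := subset_leq_card (subsetIr (neighbours Rt (X :|: X0)) (neighbours Rt X0)).
have := subset_leq_card sNN; have := cardsUI X X0; rewrite disjX cards0.
lia.
Qed.

Lemma hall_condition_slack L Rt x y : x \in L -> y \in neighbours Rt [set x] ->
  (forall X, X \subset L -> X != set0 -> X != L -> #|X| < #|neighbours Rt X|) ->
  hall_condition (L :\ x) (Rt :\ y).
Proof.
move=> xL yNx slack X sX; have [->|X0] := eqVneq X set0; first by rewrite cards0.
have XL : X != L by apply: contraTneq xL => <-; apply/negP => /(subsetP sX); rewrite !inE eqxx.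
have /slack-/(_ X0 XL) lt_XN : X \subset L by rewrite (subset_trans sX) ?subsetDl.
have sNN : neighbours Rt X :\ y \subset neighbours (Rt :\ y) X.
  by apply/subsetP => z; rewrite !inE => /andP[-> /andP[-> ->]].
have := subset_leq_card sNN; have := cardsD1 y (neighbours Rt X).
by case: (y \in _) => /=; lia.
Qed.

Theorem hall L Rt : hall_condition L Rt -> exists h, matching L Rt h.
Proof.
move: {2}#|L| (leqnn #|L|) => n; elim: n L Rt => [|n IH] L Rt.
  by rewrite leqn0 cards_eq0 => /eqP-> _; exists id; apply: matching0.
move=> cardL hallL; have [->|/set0Pn[x xL]] := eqVneq L set0.
  by exists id; apply: matching0.
case: (boolP [exists X : {set W},
               [&& X \subset L, X != set0, X != L & #|neighbours Rt X| <= #|X|]]).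
  case/existsP=> X0 /and4P[sX0L X0n0 X0nL tight].
  have [hallX0 hallLX0] := hall_condition_tight hallL sX0L tight.
  have [h1 m1] : exists h, matching X0 (neighbours Rt X0) h.
    by apply: IH hallX0; rewrite -ltnS (leq_trans _ cardL) // proper_card // properEneq X0nL.
  have [h2 m2] : exists h, matching (L :\: X0) (Rt :\: neighbours Rt X0) h.
    apply: IH hallLX0; rewrite -card_gt0 in X0n0.
    by have := cardsID X0 L; rewrite (setIidPr sX0L); lia.
  have defL : X0 :|: (L :\: X0) = L by rewrite -{2}(setID L X0) (setIidPr sX0L).
  exists (fun x => if x \in X0 then h1 x else h2 x); rewrite -defL.
  exact: matchingU (neighbours_subset _ _) m1 m2.
rewrite negb_exists => /forallP noTight.
have [y yNx] : exists y, y \in neighbours Rt [set x].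
  by apply/set0Pn; rewrite -card_gt0 (leq_trans _ (hallL _ _)) ?cards1 ?sub1set.
have [h2 m2] : exists h, matching (L :\ x) (Rt :\ y) h.
  apply: IH; first by move: cardL; rewrite (cardsD1 x L) xL.
  apply: hall_condition_slack xL yNx _ => X sXL X0 XL.
  by move: (noTight X); rewrite sXL X0 XL /= -ltnNge.
exists (fun z => if z \in [set x] then y else h2 z); rewrite -(setD1K xL).
by apply: matchingU (matching1 yNx) m2; rewrite sub1set; move: yNx; rewrite inE => /andP[].
Qed.
End Hall.

Section BipartiteEdgeCover.
Variables (W : finType) (adj : rel W) (side : W -> bool) (Z : {set W}).
Hypothesis adjC : symmetric adj.
Hypothesis adj_side : forall a b, adj a b -> side a != side b.
Hypothesis Z_no_isolated : {in Z, forall w, exists2 w', w' \in Z & adj w w'}.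
Implicit Types S X : {set W}.

Definition stable S := [forall a in S, forall b in S, ~~ adj a b].

Lemma stableP S : reflect {in S &, forall a b, ~~ adj a b} (stable S).
Proof.
apply: (iffP forallP) => [st a b aS bS | st a]; last first.
  by apply/implyP => aS; apply/forall_inP => b bS; apply: st.
by move: (st a); rewrite aS => /forall_inP; apply.
Qed.

Section MaximumStable.
Variable S : {set W}.
Hypotheses (SZ : S \subset Z) (S_stable : stable S).
Hypothesis S_max : forall S', S' \subset Z -> stable S' -> #|S'| <= #|S|.

Lemma max_stable_one_side X b : X \subset Z :\: S -> {in X, forall x, side x = b} ->
  #|X| <= #|neighbours adj S X|.
Proof.
move=> sXZS Xb; set NX := neighbours adj S X.
have disjX : (S :\: NX) :&: X = set0.
  by apply/setP => x; rewrite !inE; apply/andP => -[/andP[_ xS] /(subsetP sXZS)]; rewrite inE xS.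
suff: #|(S :\: NX) :|: X| <= #|S|.
  have := cardsUI (S :\: NX) X; have := cardsID NX S.
  rewrite disjX cards0 (setIidPr (neighbours_subset adj S X)) -/NX; lia.
apply: S_max.
  by rewrite subUset (subset_trans (subsetDl S NX)) // (subset_trans sXZS) ?subsetDl.
have noN x y : x \in X -> y \in S :\: NX -> ~~ adj x y.
  move=> xX; rewrite !inE => /andP[yNX yS]; apply: contra yNX => axy.
  by rewrite yS; apply/existsP; exists x; rewrite xX.
apply/stableP => x y /[!in_setU] /orP[xS|xX] /orP[yS|yX].
- by move/stableP: S_stable; apply; [move: xS | move: yS]; rewrite inE => /andP[].
- by rewrite adjC noN.
- by rewrite noN.
- by apply/negP => /adj_side; rewrite (Xb x xX) (Xb y yX) eqxx.
Qed.

Lemma max_stable_hall : hall_condition adj (Z :\: S) S.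
Proof.
move=> X sX; pose Xs b := [set x in X | side x == b].
have XsZ b : Xs b \subset Z :\: S.
  by apply: subset_trans sX; apply/subsetP => x; rewrite inE => /andP[].
have Xs_side b : {in Xs b, forall x, side x = b} by move=> x; rewrite inE => /andP[_ /eqP].
have cardX : #|Xs true| + #|Xs false| = #|X|.
  rewrite -(cardsID [set x | side x] X); congr (_ + _); apply: eq_card => x.
    by rewrite /Xs !inE; case: (side x); rewrite /= ?andbT ?andbF.
  by rewrite /Xs !inE; case: (side x); rewrite /= ?andbT ?andbF.
have disjN : neighbours adj S (Xs true) :&: neighbours adj S (Xs false) = set0.
  apply/setP => y; rewrite !inE; apply/negP.
  case/and3P=> /andP[_ N1] _ /exists_inP[x0 /Xs_side s0 /adj_side].
  case/exists_inP: N1 => x1 /Xs_side s1 /adj_side.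
  by rewrite s0 s1; case: (side y).
have sNU : neighbours adj S (Xs true) :|: neighbours adj S (Xs false) \subset neighbours adj S X.
  by rewrite subUset !neighboursS //; apply/subsetP => x; rewrite inE => /andP[].
have := max_stable_one_side (XsZ true) (Xs_side true).
have := max_stable_one_side (XsZ false) (Xs_side false).
have := cardsUI (neighbours adj S (Xs true)) (neighbours adj S (Xs false)).
rewrite disjN cards0; have := subset_leq_card sNU; lia.
Qed.
End MaximumStable.

Theorem bipartite_edge_cover : exists (S : {set W}) (F : {set W * W}),
  [/\ S \subset Z, stable S, {in F, forall e, adj e.1 e.2},
      {in Z, forall w, exists2 e, e \in F & (e.1 == w) || (e.2 == w)} & #|F| <= #|S|].
Proof.
have [S /andP[SZ S_stable] S_max] : exists2 S : {set W}, (S \subset Z) && stable S &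
    forall S', (S' \subset Z) && stable S' -> #|S'| <= #|S|.
  pose P S := (S \subset Z) && stable S.
  have P0 : P set0 by rewrite /P sub0set; apply/stableP => a; rewrite inE.
  by case: (arg_maxnP (fun S => #|S|) P0) => S; exists S.
pose C := Z :\: S.
have [h [hS hinj]] : exists h, matching adj C S h.
  by apply/hall/max_stable_hall => // S' S'Z S'st; apply/S_max/andP.
pose nb w := odflt w [pick w' in Z | adj w w'].
have nbP w : w \in Z -> adj w (nb w).
  move=> wZ; rewrite /nb; case: pickP => [w' /andP[] //|none].
  by case: (Z_no_isolated wZ) => w' w'Z aww'; move: (none w'); rewrite w'Z aww'.
pose k w := if w \in C then h w else nb w.
exists S, [set (w, k w) | w in C :|: (S :\: h @: C)]; split => //.
- move=> _ /imsetP[w wD ->] /=; rewrite /k; case: ifP => wC; first by case/andP: (hS w wC).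
  by apply: nbP; move: wD; rewrite in_setU wC /= inE /= => /andP[_ /(subsetP SZ)].
- move=> w wZ; have [wC|wC] := boolP (w \in C).
    by exists (w, k w); rewrite ?eqxx // imset_f // in_setU wC.
  have wS : w \in S by move: wC; rewrite inE wZ andbT negbK.
  have [/imsetP[c cC ->]|whC] := boolP (w \in h @: C).
    by exists (c, k c); rewrite ?imset_f ?in_setU ?cC // /k cC eqxx orbT.
  by exists (w, k w); rewrite ?eqxx // imset_f // in_setU in_setD whC wS orbT.
- apply: leq_trans (leq_imset_card _ _) _.
  have hCS : h @: C \subset S by apply/subsetP => _ /imsetP[c cC ->]; case/andP: (hS c cC).
  have disjC : C :&: (S :\: h @: C) = set0.
    by apply/setP => x; rewrite !inE; case: (x \in S); rewrite ?andbF.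
  have := cardsUI C (S :\: h @: C); have := cardsID (h @: C) S.
  by rewrite disjC cards0 (setIidPr hCS) (card_in_imset hinj); lia.
Qed.
End BipartiteEdgeCover.

Local Open Scope ring_scope.

Section CauchySchwarz.
Variables (R : rcfType) (A : finType).

Lemma lagrange_identity (p q : A -> R) :
  \sum_a \sum_b (p a * q b - p b * q a) ^+ 2 =
  2 * ((\sum_a p a ^+ 2) * (\sum_a q a ^+ 2) - (\sum_a p a * q a) ^+ 2).
Proof.
have sum2 (f g : A -> R) : \sum_a \sum_b f a * g b = (\sum_a f a) * (\sum_b g b).
  by rewrite big_distrlr.
transitivity (\sum_a \sum_b (p a ^+ 2 * q b ^+ 2) + \sum_a \sum_b (q a ^+ 2 * p b ^+ 2)
              - 2 * \sum_a \sum_b (p a * q a * (p b * q b))).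
  rewrite mulr_sumr -big_split -sumrB /=; apply: eq_bigr => a _.
  by rewrite mulr_sumr -big_split -sumrB /=; apply: eq_bigr => b _; ring.
by rewrite !sum2 expr2; ring.
Qed.

Lemma cauchy_schwarz (p q : A -> R) :
  \sum_a p a * q a <= Num.sqrt (\sum_a p a ^+ 2) * Num.sqrt (\sum_a q a ^+ 2).
Proof.
have sqr_le : (\sum_a p a * q a) ^+ 2 <= (\sum_a p a ^+ 2) * (\sum_a q a ^+ 2).
  have : 0 <= \sum_a \sum_b (p a * q b - p b * q a) ^+ 2.
    by apply: sumr_ge0 => a _; apply: sumr_ge0 => b _; apply: sqr_ge0.
  by rewrite lagrange_identity pmulr_rge0 // subr_ge0.
rewrite -sqrtrM ?sumr_ge0 // => [|a _]; last exact: sqr_ge0.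
by rewrite (le_trans (ler_norm _)) // -sqrtr_sqr ler_wsqrtr.
Qed.

Lemma sqrt_le_sqrt_sum (m : A -> R) a : (forall b, 0 <= m b) ->
  Num.sqrt (m a) <= Num.sqrt (\sum_b m b).
Proof. by move=> m0; rewrite ler_wsqrtr // (bigD1 a) //= lerDl sumr_ge0. Qed.

Lemma sum_prod_sqrt_le (I : finType) (C : {set I}) (m : I -> A -> R) :
  (1 < #|C|)%N -> (forall i a, 0 <= m i a) ->
  \sum_a \prod_(i in C) Num.sqrt (m i a) <= \prod_(i in C) Num.sqrt (\sum_a m i a).
Proof.
case/card_gt1P=> i1 [i2 [i1C i2C i12]] m0.
pose C' := C :\ i1 :\ i2.
have splitC (F : I -> R) : \prod_(i in C) F i = F i1 * F i2 * \prod_(i in C') F i.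
  rewrite (bigD1 i1) // (bigD1 i2) /=; last by rewrite i2C eq_sym.
  rewrite mulrA; congr (_ * _); apply: eq_bigl => i; rewrite !inE.
  by case: (i \in C) (i == i1) (i == i2) => [] [] [].
have sqr_sqrt i : \sum_a Num.sqrt (m i a) ^+ 2 = \sum_a m i a.
  by apply: eq_bigr => a _; rewrite sqr_sqrtr.
rewrite splitC; apply: (@le_trans _ _ (\sum_a Num.sqrt (m i1 a) * Num.sqrt (m i2 a) *
                                      \prod_(i in C') Num.sqrt (\sum_b m i b))).
  apply: ler_sum => a _; rewrite splitC ler_wpM2l ?mulr_ge0 ?sqrtr_ge0 //.
  by apply: ler_prod => i _; rewrite sqrtr_ge0 sqrt_le_sqrt_sum.
rewrite -mulr_suml; apply: ler_wpM2r; first by apply: prodr_ge0 => i _; apply: sqrtr_ge0.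
by rewrite -!sqr_sqrt; apply: cauchy_schwarz.
Qed.

Lemma sum_prod_sqrt_le_cover (I : finType) (C : {set I}) (m : I -> A -> R) (M : I -> R) :
  (1 < #|C|)%N -> (forall i a, 0 <= m i a) ->
  {in C, forall i, \sum_a m i a <= M i} -> (forall i a, i \notin C -> m i a <= M i) ->
  \sum_a \prod_i Num.sqrt (m i a) <= \prod_i Num.sqrt (M i).
Proof.
move=> C2 m0 mC mCc; rewrite [X in _ <= X](bigID (mem C)) /=.
apply: (@le_trans _ _ (\sum_a (\prod_(i in C) Num.sqrt (m i a)) *
                        \prod_(i | i \notin C) Num.sqrt (M i))).
  apply: ler_sum => a _; rewrite (bigID (mem C)) /= ler_wpM2l ?prodr_ge0 // => [i _|].
    exact: sqrtr_ge0.
  by apply: ler_prod => i iC; rewrite sqrtr_ge0 ler_wsqrtr ?mCc.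
rewrite -mulr_suml; apply: ler_wpM2r; first by apply: prodr_ge0 => i _; apply: sqrtr_ge0.
apply: le_trans (sum_prod_sqrt_le C2 m0) _.
by apply: ler_prod => i iC; rewrite sqrtr_ge0 ler_wsqrtr ?mC.
Qed.
End CauchySchwarz.

Section Elimination.
Variables (R : rcfType) (V A I : finType).
Implicit Types (X : {set V}) (t : {ffun V -> A}) (x : V) (a : A).

Definition agree_off X (t0 : {ffun V -> A}) : {set {ffun V -> A}} :=
  [set t : {ffun V -> A} | [forall x, (x \notin X) ==> (t x == t0 x)]].

Definition fupd (t0 : {ffun V -> A}) x a : {ffun V -> A} :=
  [ffun z => if z == x then a else t0 z].

Lemma agree_off0 t0 : agree_off set0 t0 = [set t0].
Proof.
apply/setP => t; rewrite !inE; apply/forallP/eqP => [t_t0|-> x]; last by rewrite eqxx implybT.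
by apply/ffunP => x; apply/eqP; move: (t_t0 x); rewrite inE.
Qed.

Lemma sum_agree_offD1 (F : {ffun V -> A} -> R) X t0 x : x \in X ->
  \sum_(t in agree_off X t0) F t = \sum_a \sum_(t in agree_off (X :\ x) (fupd t0 x a)) F t.
Proof.
move=> xX; rewrite (partition_big (fun t : {ffun V -> A} => t x) predT) //=.
apply: eq_bigr => a _; apply: eq_bigl => t; rewrite !inE.
apply/andP/forallP => [[/forallP t_t0 /eqP txa] z | t_t0].
  rewrite ffunE !inE negb_and negbK; case: eqP => [->|_]; first by rewrite txa eqxx.
  exact: t_t0.
split; last by move: (t_t0 x); rewrite ffunE eqxx !inE eqxx.
apply/forallP => z; apply/implyP => zX; move: (t_t0 z); rewrite ffunE !inE negb_and negbK.
by case: eqP => [zx|_]; [move: zX; rewrite zx xX | rewrite zX].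
Qed.

Variables (g : I -> {ffun V -> A} -> R) (M : I -> {set V} -> {ffun V -> A} -> R).
Variables (cover : I -> {set V}) (admissible : {set V} -> Prop).
Hypothesis g_ge0 : forall i t, 0 <= g i t.
Hypothesis M_ge0 : forall i X t, 0 <= M i X t.
Hypothesis g_le_sqrt_M0 : forall i t, g i t <= Num.sqrt (M i set0 t).
Hypothesis elimination_step : forall X, admissible X -> X != set0 -> exists2 x, x \in X &
  [/\ admissible (X :\ x), (1 < #|[set i | x \in cover i]|)%N,
      forall i t0, x \in cover i -> \sum_a M i (X :\ x) (fupd t0 x a) <= M i X t0 &
      forall i t0 a, x \notin cover i -> M i (X :\ x) (fupd t0 x a) <= M i X t0].

Theorem sum_agree_off_prod_le X t0 : admissible X ->
  \sum_(t in agree_off X t0) \prod_i g i t <= \prod_i Num.sqrt (M i X t0).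
Proof.
move: {2}#|X| (erefl #|X|) => n; elim: n X t0 => [|n IH] X t0 cardX admX.
  move/eqP: cardX; rewrite cards_eq0 => /eqP->; rewrite agree_off0 big_set1.
  by apply: ler_prod => i _; rewrite g_ge0 g_le_sqrt_M0.
have [|x xX [admXx cover2 M_cover M_other]] := elimination_step admX.
  by rewrite -card_gt0 cardX.
have cardXx : #|X :\ x| = n by move: cardX; rewrite (cardsD1 x X) xX => -[].
rewrite (sum_agree_offD1 _ _ xX); apply: le_trans (ler_sum _ (fun a _ => IH _ _ cardXx admXx)) _.
apply: sum_prod_sqrt_le_cover cover2 _ _ _ => [i a|i|i a] //; first by rewrite inE => /M_cover.
by rewrite inE => /M_other.
Qed.
End Elimination.

Section DoubleCover.
Variables (R : realType) (V Rel : finType) (src dst : Rel -> V).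

Definition adjacent (x y : V) : bool :=
  [exists r, ((src r == x) && (dst r == y)) || ((src r == y) && (dst r == x))].

Definition cover_adj (w w' : V * bool) : bool := (w.2 != w'.2) && adjacent w.1 w'.1.

Lemma cover_adjC : symmetric cover_adj.
Proof.
move=> w w'; rewrite /cover_adj eq_sym; congr (_ && _).
by apply/existsP/existsP => -[r]; exists r; rewrite orbC.
Qed.

Lemma cover_adj_side w w' : cover_adj w w' -> w.2 != w'.2.
Proof. by case/andP. Qed.

Definition cover_weight (S : {set V * bool}) (x : V) : R :=
  (((x, false) \in S) + ((x, true) \in S))%:R / 2.

Lemma cover_weight_packing S : stable cover_adj S -> vertex_packing src dst (cover_weight S).
Proof.
move/stableP=> S_stable; split=> [x|r]; rewrite /cover_weight.
  have : (((x, false) \in S) + ((x, true) \in S) <= 2)%N by case: (_ \in S); case: (_ \in S).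
  by rewrite -(ler_nat R) => le2; apply/andP; split; [apply: divr_ge0 | lra].
have adj_r : adjacent (src r) (dst r) by apply/existsP; exists r; rewrite !eqxx.
have not_both b : ~~ (((src r, b) \in S) && ((dst r, ~~ b) \in S)).
  by apply/andP => -[sS dS]; move: (S_stable _ _ sS dS); rewrite /cover_adj /= adj_r; case: b sS dS.
have : (((src r, false) \in S) + ((src r, true) \in S) +
        (((dst r, false) \in S) + ((dst r, true) \in S)) <= 2)%N.
  by move: (not_both false) (not_both true); do 4!case: (_ \in S).
by rewrite -(ler_nat R) natrD; lra.
Qed.

Lemma sum_cover_weight S : \sum_x cover_weight S x = #|S|%:R / 2.
Proof.
rewrite -mulr_suml -natr_sum; congr (_%:R / 2).
transitivity (\sum_x \sum_b (if (x, b) \in S then 1 else 0))%N.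
  by apply: eq_bigr => x _; rewrite big_bool addnC; do 2!case: (_ \in S).
by rewrite pair_bigA -sum1_card [RHS]big_mkcond; apply: eq_bigr => -[x b].
Qed.

Lemma powR_le_AGM (u : V -> R) N : (1 <= N)%N -> vertex_packing src dst u ->
  N%:R `^ (\sum_x u x) <= AGM R src dst N.
Proof.
move=> N1 u_packing; apply: sup_upper_bound; last by exists u.
split; first by exists (N%:R `^ (\sum_x u x)), u.
exists (N%:R `^ #|V|%:R) => _ [u' [[u'01 _] ->]].
rewrite ler_powR ?ler1n // -sumr_const; apply: ler_sum => x _.
by case/andP: (u'01 x).
Qed.
End DoubleCover.

Lemma sum_card_fibers (P B : finType) (A : {set P}) (f : P -> B) :
  (\sum_b #|[set p in A | f p == b]| = #|A|)%N.
Proof.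
rewrite -sum1_card (partition_big f predT) //=; apply: eq_bigr => b _.
by rewrite -sum1_card; apply: eq_bigl => p; rewrite inE.
Qed.

Lemma card_le_sum (R : numDomainType) (T : finType) (A B : {set T}) (f : T -> R) :
  A \subset B -> (forall t, 0 <= f t) -> {in A, forall t, f t = 1} ->
  (#|A|%:R : R) <= \sum_(t in B) f t.
Proof.
move=> sAB f0 fA; rewrite (big_setID A) /= (setIidPr sAB) -[X in X <= _]addr0.
by rewrite lerD ?sumr_ge0 // (eq_bigr (fun=> 1)) // sumr_const.
Qed.

Section JoinBound.
Variables (R : realType) (V D Rel : finType) (src dst : Rel -> V).
Variables (inst : Rel -> {set D * D}) (N : nat) (U : {set V}).
Hypothesis src_neq_dst : forall r, src r != dst r.
Hypothesis N_ge1 : (1 <= N)%N.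
Hypothesis inst_small : forall r, (#|inst r| <= N)%N.
Hypothesis outside_linked : forall y, y \notin U ->
  exists r, (src r \in U /\ dst r = y) \/ (dst r \in U /\ src r = y).
Hypothesis light_inst : forall r,
  (src r \in U -> dst r \notin U -> light R src dst inst N r (src r)) /\
  (dst r \in U -> src r \notin U -> light R src dst inst N r (dst r)).

Local Notation J := (joinAttrs src dst U).
Local Notation tuple := {ffun V -> option D}.
Local Notation sqrtN := (Num.sqrt (N%:R : R)).
Implicit Types (r : Rel) (X : {set V}) (t : tuple).

Definition links r y := ((src r \in U) && (dst r == y)) || ((dst r \in U) && (src r == y)).

Lemma links_touches r y : links r y -> touches src dst U r.
Proof. by rewrite /touches => /orP[]/andP[->]; rewrite ?orbT. Qed.

Lemma touches_joinAttrs r : touches src dst U r -> (src r \in J) && (dst r \in J).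
Proof.
by move=> tr; rewrite !inE; apply/andP; split; apply/existsP; exists r; rewrite tr eqxx ?orbT.
Qed.

Lemma exists_links y : y \notin U -> exists r, links r y.
Proof.
by case/outside_linked=> r [[rU <-]|[rU <-]]; exists r; rewrite /links rU eqxx ?orbT.
Qed.

Lemma outside_joinAttrs y : y \notin U -> y \in J.
Proof.
case/exists_links=> r lry; have /touches_joinAttrs/andP[sJ dJ] := links_touches lry.
by case/orP: lry => /andP[_ /eqP<-].
Qed.

Definition on_ends r (P : pred V) := P (src r) && P (dst r).

Lemma on_ends_other r x : x \in [set src r; dst r] ->
  exists2 y, y != x & forall P, on_ends r P = P x && P y.
Proof.
rewrite !inE => /orP[]/eqP->.
  by exists (dst r); rewrite // eq_sym src_neq_dst.
by exists (src r) => // P; rewrite /on_ends andbC.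
Qed.

Definition coord r z (p : D * D) : D := if z == src r then p.1 else p.2.

Definition satisfies r t : bool :=
  [exists p in inst r, on_ends r (fun z => t z == Some (coord r z p))].

Definition compatible r X (t0 : tuple) : {set D * D} :=
  [set p in inst r | on_ends r (fun z => (z \in X) || (t0 z == Some (coord r z p)))].

Lemma satisfiesE r t : satisfies r t =
  [exists p in inst r, (t (src r) == Some p.1) && (t (dst r) == Some p.2)].
Proof.
by rewrite /satisfies /on_ends /coord eqxx [dst r == _]eq_sym (negPf (src_neq_dst r)).
Qed.

Lemma degreeE r x a : degree src dst inst r x a = #|[set p in inst r | coord r x p == a]|.
Proof. by rewrite /degree /coord; case: (x == src r). Qed.

Lemma sum_card_compatible r X t0 x : x \in X -> x \in [set src r; dst r] ->
  (\sum_a #|compatible r (X :\ x) (fupd t0 x a)| = #|compatible r X t0|)%N.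
Proof.
move=> xX /on_ends_other[y yx endsE].
rewrite -(sum_card_fibers _ (fun p => Some (coord r x p))); apply: eq_bigr => a _.
apply: eq_card => p; rewrite !inE !endsE !ffunE eqxx (negPf yx) !inE eqxx xX yx /= (eq_sym a).
by case: (p \in inst r); rewrite /= ?andbT // andbC.
Qed.

Lemma compatible_fupd_other r X t0 x a : x \notin [set src r; dst r] ->
  compatible r (X :\ x) (fupd t0 x a) = compatible r X t0.
Proof.
rewrite !inE negb_or => /andP[xs xd]; apply/setP => p.
by rewrite !inE /on_ends !ffunE !inE ![_ == x]eq_sym (negPf xs) (negPf xd).
Qed.

Lemma satisfies_fupd_other r t0 x a : x \notin [set src r; dst r] ->
  satisfies r (fupd t0 x a) = satisfies r t0.
Proof.
rewrite !inE negb_or => /andP[xs xd].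
by rewrite /satisfies /on_ends !ffunE ![_ == x]eq_sym (negPf xs) (negPf xd).
Qed.

Lemma sum_satisfies_fupd_le r y t0 : y \notin U -> links r y ->
  \sum_a ((satisfies r (fupd t0 y a))%:R : R) <= sqrtN.
Proof.
move=> yU lry.
have [x [xy endsE light_x]] : exists x, [/\ x != y, forall P, on_ends r P = P x && P y &
                                           light R src dst inst N r x].
  case/orP: lry => /andP[rU /eqP ry]; [exists (src r) | exists (dst r)]; rewrite -ry in yU *.
    by split; rewrite ?src_neq_dst //; apply: (light_inst r).1.
  by split=> [|P|]; rewrite 1?eq_sym ?src_neq_dst ?/on_ends 1?andbC //; apply: (light_inst r).2.
pose Ax := [set p in inst r | t0 x == Some (coord r x p)].
apply: (@le_trans _ _ #|Ax|%:R).
  rewrite -natr_sum ler_nat -(sum_card_fibers Ax (fun p => Some (coord r y p))).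
  apply: leq_sum => a _; case: (boolP (satisfies _ _)) => [/exists_inP[p pr]|_] //.
  rewrite endsE !ffunE eqxx (negPf xy) => /andP[t0x /eqP ay].
  by apply/card_gt0P; exists p; rewrite !inE pr t0x ay eqxx.
case t0xE : (t0 x) => [v|].
  apply: le_trans (light_x v); rewrite degreeE ler_nat subset_leq_card //.
  by apply/subsetP => p; rewrite !inE t0xE => /andP[-> /eqP[->]]; rewrite eqxx.
have -> : Ax = set0 by apply/setP => p; rewrite !inE t0xE andbF.
by rewrite cards0 sqrtr_ge0.
Qed.

Inductive factor := NoFactor | RelFactor of Rel | LightFactor of Rel & V.

Definition factor_val f t : R :=
  match f with
  | NoFactor => 1
  | RelFactor r => (satisfies r t)%:R
  | LightFactor r _ => (satisfies r t)%:R
  end.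

(* The bound on factor [f] maintained by the elimination while the attributes
   in [X] are still free and the others are fixed by [t0]. *)
Definition potential f X t0 : R :=
  match f with
  | NoFactor => 1
  | RelFactor r => #|compatible r X t0|%:R
  | LightFactor r y => if y \in X then sqrtN else (satisfies r t0)%:R
  end.

Definition factor_vars f : {set V} :=
  match f with
  | NoFactor => set0
  | RelFactor r => [set src r; dst r]
  | LightFactor _ y => [set y]
  end.

Definition factor_bound f : R :=
  match f with NoFactor => 1 | RelFactor _ => N%:R | LightFactor _ _ => sqrtN end.

Definition valid_factor f : bool :=
  match f with
  | NoFactor => true
  | RelFactor r => touches src dst U r
  | LightFactor r y => (y \notin U) && links r y
  end.

(* The attributes of U are eliminated first, so that a light factor is summed
   over its attribute outside U only once its attribute in U is fixed. *)
Definition admissible X := X \subset J /\ (X :&: U != set0 -> J :\: U \subset X).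

Lemma sqrtN_ge1 : 1 <= sqrtN.
Proof. by rewrite -{1}sqrtr1 ler_wsqrtr // ler1n. Qed.

Lemma factor_val_ge0 f t : 0 <= factor_val f t.
Proof. by case: f => *. Qed.

Lemma potential_ge0 f X t : 0 <= potential f X t.
Proof. by case: f => // r y /=; case: ifP; rewrite ?sqrtr_ge0. Qed.

Lemma factor_val_le_sqrt_potential f t : factor_val f t <= Num.sqrt (potential f set0 t).
Proof.
case: f => [|r|r y] /=; rewrite ?sqrtr1 ?inE //.
  case: (boolP (satisfies r t)) => [/exists_inP[p pr tp]|_]; last exact: sqrtr_ge0.
  rewrite -{1}sqrtr1 ler_wsqrtr // ler1n; apply/card_gt0P; exists p.
  by rewrite !inE pr; move: tp; rewrite /on_ends !inE.
by case: (satisfies r t); rewrite ?sqrtr1 ?sqrtr0.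
Qed.

Lemma potential_sum_le f X t0 x : valid_factor f -> x \in X -> x \in factor_vars f ->
  \sum_a potential f (X :\ x) (fupd t0 x a) <= potential f X t0.
Proof.
case: f => [|r|r y] /= valid_f xX; first by rewrite inE.
  by move=> xr; rewrite -natr_sum sum_card_compatible.
rewrite inE => /eqP xy; subst x; case/andP: valid_f => yU lry; rewrite xX.
under eq_bigr do rewrite !inE eqxx /=.
exact: sum_satisfies_fupd_le.
Qed.

Lemma potential_fupd_le f X t0 x a : valid_factor f -> admissible X -> x \in X ->
  x \notin factor_vars f -> potential f (X :\ x) (fupd t0 x a) <= potential f X t0.
Proof.
case: f => [|r|r y] //= valid_f [XJ U_first] xX xf; first by rewrite compatible_fupd_other.
have xy : x != y by move: xf; rewrite inE.
rewrite !inE [y == x]eq_sym (negPf xy) /=; case: ifP => // yX.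
case/andP: valid_f => yU lry.
have XU0 : X :&: U = set0.
  apply/eqP; apply: contraFT yX => /U_first/subsetP; apply.
  by rewrite inE yU outside_joinAttrs.
have xU : x \notin U by apply: contra_eqN XU0 => xU; apply/set0Pn; exists x; rewrite inE xX.
rewrite satisfies_fupd_other // !inE negb_or.
by case/orP: lry => /andP[rU /eqP ry]; rewrite ry xy ?andbT; apply: contraNneq xU => ->.
Qed.

Lemma factor_bound_ge0 f : 0 <= factor_bound f.
Proof. by case: f => *; rewrite /= ?sqrtr_ge0. Qed.

Lemma potential_le_bound f X t0 : potential f X t0 <= factor_bound f.
Proof.
case: f => [|r|r y] //=.
  rewrite ler_nat (leq_trans _ (inst_small r)) // subset_leq_card //.
  by apply/subsetP => p; rewrite inE => /andP[].
by case: ifP => // _; apply: le_trans sqrtN_ge1; case: (satisfies r t0).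
Qed.

Lemma factor_val_joinT f t : valid_factor f -> t \in joinT src dst inst U ->
  factor_val f t = 1.
Proof.
have sat_r r : touches src dst U r -> t \in joinT src dst inst U ->
    (satisfies r t)%:R = 1 :> R.
  by move=> tr; rewrite inE satisfiesE => /andP[_ /forallP/(_ r)]; rewrite tr /= => ->.
case: f => [|r|r y] //=; first exact: sat_r.
by case/andP=> _ /links_touches; apply: sat_r.
Qed.

Lemma joinT_subset : joinT src dst inst U \subset agree_off J [ffun=> None].
Proof.
apply/subsetP => t; rewrite !inE => /andP[/forallP domt _]; apply/forallP => x.
by apply/implyP => xJ; move: (domt x); rewrite (negPf xJ) ffunE; case: (t x).
Qed.

Lemma admissible_J : admissible J.
Proof. by split=> // _; apply: subsetDl. Qed.

Lemma admissible_step X : admissible X -> X != set0 ->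
  exists2 x, x \in X & admissible (X :\ x).
Proof.
move=> [XJ U_first] /set0Pn[x0 x0X].
have XxJ x : X :\ x \subset J by rewrite (subset_trans _ XJ) ?subsetDl.
have [/eqP XU0|/set0Pn[x /[!inE] /andP[xX xU]]] := boolP (X :&: U == set0).
  exists x0 => //; split=> // /set0Pn[z]; rewrite !inE => /andP[/andP[_ zX] zU].
  by move/setP: XU0 => /(_ z); rewrite !inE zX zU.
exists x => //; split=> // _; apply/subsetP => y yJU; rewrite !inE.
have /[!inE] /andP[yU _] := yJU.
rewrite (subsetP (U_first _) y yJU) ?andbT; first by apply: contraNneq yU => ->.
by apply/set0Pn; exists x; rewrite inE xX.
Qed.

Definition cover_vertices : {set V * bool} := [set w | w.1 \in J].

Definition rel_between x y : option Rel :=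
  [pick r | ((src r == x) && (dst r == y)) || ((src r == y) && (dst r == x))].

Definition link_rel y : option Rel := [pick r | links r y].

Local Notation cedge := ((V * bool) * (V * bool))%type.

Definition edge_factor (F : {set cedge}) (i : cedge * bool) : factor :=
  let: (e, b) := i in
  if e \notin F then NoFactor
  else if (e.1.1 \in U) || (e.2.1 \in U) then
    (if b then NoFactor else oapp RelFactor NoFactor (rel_between e.1.1 e.2.1))
  else let y := if b then e.2.1 else e.1.1 in oapp (LightFactor^~ y) NoFactor (link_rel y).

Lemma edge_factor_valid F i : valid_factor (edge_factor F i).
Proof.
case: i => e b /=; case: ifP => // _; case: ifP => [eU|].
  case: b => //; rewrite /rel_between; case: pickP => //= r.
  by rewrite /touches => /orP[]/andP[/eqP-> /eqP->] //; rewrite orbC.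
rewrite /link_rel; case: pickP => //= r lry /negbT; rewrite negb_or lry andbT.
by case/andP=> e1U e2U; case: ifP.
Qed.

Lemma cover_no_isolated :
  {in cover_vertices, forall w, exists2 w', w' \in cover_vertices & cover_adj src dst w w'}.
Proof.
move=> w; rewrite !inE => /existsP[r /andP[tr /orP[]/eqP w1]].
all: have /andP[sJ dJ] := touches_joinAttrs tr.
  exists (dst r, ~~ w.2); first by rewrite inE.
  rewrite /cover_adj /= w1; case: (w.2); apply/existsP; exists r; rewrite !eqxx //.
exists (src r, ~~ w.2); first by rewrite inE.
rewrite /cover_adj /= w1.
by case: (w.2); apply/existsP; exists r; rewrite !eqxx orbT.
Qed.

Lemma adjacent_irrefl x : ~~ adjacent src dst x x.
Proof.
apply/existsP => -[r]; rewrite orbb => /andP[/eqP sx /eqP dx].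
by move: (src_neq_dst r); rewrite sx dx eqxx.
Qed.

Section EdgeCover.
Variable F : {set cedge}.
Hypothesis F_adj : {in F, forall e, cover_adj src dst e.1 e.2}.
Hypothesis F_cover :
  {in cover_vertices, forall w, exists2 e, e \in F & (e.1 == w) || (e.2 == w)}.

Lemma edge_factor_covers e w : e \in F -> (e.1 == w) || (e.2 == w) ->
  exists b, w.1 \in factor_vars (edge_factor F (e, b)).
Proof.
move=> eF ew; have /andP[_ /existsP[r0 r0e]] := F_adj eF.
exists (~~ ((e.1.1 \in U) || (e.2.1 \in U)) && (e.2 == w)).
rewrite /= eF /=; case: ifP => [eU|eUn] /=; rewrite ?eU ?eUn /=.
  rewrite /rel_between; case: pickP => [r /= re|/(_ r0)]; last by rewrite r0e.
  by case/orP: ew => /eqP<-; case/orP: re => /andP[/eqP-> /eqP->]; rewrite !inE eqxx ?orbT.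
set y := if _ then _ else _.
have yw : y = w.1 by rewrite /y; case: eqP => [->//|e2w]; case/orP: ew => /eqP // <-.
have yU : y \notin U by move/negbT: eUn; rewrite negb_or /y => /andP[? ?]; case: ifP.
rewrite /link_rel; case: pickP => [r _|none] /=; first by rewrite inE yw.
by have [r lry] := exists_links yU; move: (none r); rewrite lry.
Qed.


Lemma two_factors_cover x : x \in J ->
  (1 < #|[set i | x \in factor_vars (edge_factor F i)]|)%N.
Proof.
move=> xJ; have [e1 e1F e1x] : exists2 e, e \in F & (e.1 == (x, false)) || (e.2 == (x, false)).
  by apply: F_cover; rewrite inE.
have [e2 e2F e2x] : exists2 e, e \in F & (e.1 == (x, true)) || (e.2 == (x, true)).
  by apply: F_cover; rewrite inE.
have e12 : e1 != e2. (* an edge covering both (x, false) and (x, true) is a loop *)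
  apply: contraTneq e2x => <-; have := F_adj e1F; move: e1x {e1F}.
  case: e1 => -[x1 b1] [x2 b2] /=; rewrite !xpair_eqE /cover_adj /=.
  case: b1 b2 => [] [] //=; rewrite ?andbT ?andbF ?orbF //= => /eqP-> xx;
    by apply: contraTneq xx => ->; apply: adjacent_irrefl.
have [b1 e1_covers] := edge_factor_covers e1F e1x.
have [b2 e2_covers] := edge_factor_covers e2F e2x.
apply: (@leq_trans #|[set (e1, b1); (e2, b2)]|); first by rewrite cards2 xpair_eqE (negPf e12).
by apply/subset_leq_card/subsetP => i; rewrite !inE => /orP[]/eqP->.
Qed.

Lemma prod_factor_bound_le : \prod_i factor_bound (edge_factor F i) <= N%:R ^+ #|F|.
Proof.
have light_le (o : option Rel) y : factor_bound (oapp (LightFactor^~ y) NoFactor o) <= sqrtN.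
  by case: o => [r|] /=; rewrite ?sqrtN_ge1.
have N_sqr : sqrtN * sqrtN = N%:R by rewrite -expr2 sqr_sqrtr.
have -> : \prod_i factor_bound (edge_factor F i) =
          \prod_e \prod_b factor_bound (edge_factor F (e, b)).
  by rewrite pair_bigA; apply: eq_bigr => -[].
rewrite -prodr_const [X in _ <= X]big_mkcond /=; apply: ler_prod => e _.
rewrite big_bool mulr_ge0 ?factor_bound_ge0 //= /edge_factor.
case: (e \in F) => /=; last by rewrite mulr1.
case: ifP => _; last by rewrite -N_sqr ler_pM ?factor_bound_ge0.
by rewrite mul1r; case: (rel_between _ _) => [r|] //=; rewrite ler1n.
Qed.
Lemma edge_factor_step X : admissible X -> X != set0 -> exists2 x, x \in X &
  [/\ admissible (X :\ x), (1 < #|[set i | x \in factor_vars (edge_factor F i)]|)%N,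
      forall i t0, x \in factor_vars (edge_factor F i) ->
        \sum_a potential (edge_factor F i) (X :\ x) (fupd t0 x a) <=
        potential (edge_factor F i) X t0 &
      forall i t0 a, x \notin factor_vars (edge_factor F i) ->
        potential (edge_factor F i) (X :\ x) (fupd t0 x a) <=
        potential (edge_factor F i) X t0].
Proof.
move=> admX X0; have [x xX admXx] := admissible_step admX X0.
exists x => //; split=> // [|i t0|i t0 a].
- by apply: two_factors_cover; case: admX => /subsetP XJ _; apply: XJ.
- exact/potential_sum_le/xX/edge_factor_valid.
- exact/potential_fupd_le/xX/admX/edge_factor_valid.
Qed.

Lemma card_joinT_sqr_le : (#|joinT src dst inst U|%:R : R) ^+ 2 <= N%:R ^+ #|F|.
Proof.
pose f := edge_factor F; pose t0 : tuple := [ffun=> None].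
have elim := @sum_agree_off_prod_le R V (option D) _ (fun i => factor_val (f i))
  (fun i => potential (f i)) (fun i => factor_vars (f i)) admissible
  (fun i => factor_val_ge0 _) (fun i => potential_ge0 _)
  (fun i => factor_val_le_sqrt_potential _) edge_factor_step J t0 admissible_J.
have le_sum : (#|joinT src dst inst U|%:R : R) <=
              \sum_(t in agree_off J t0) \prod_i factor_val (f i) t.
  apply: card_le_sum joinT_subset _ _ => [t|t tT].
    by apply: prodr_ge0 => i _; apply: factor_val_ge0.
  by apply: big1 => i _; apply: factor_val_joinT (edge_factor_valid _ _) tT.
apply: le_trans prod_factor_bound_le.
rewrite -(eq_bigr _ (fun i _ => sqr_sqrtr (factor_bound_ge0 (f i)))) prodrXl.
rewrite ler_pXn2r ?nnegrE ?ler0n ?prodr_ge0 // => [|i _]; last exact: sqrtr_ge0.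
apply: le_trans le_sum (le_trans elim _); apply: ler_prod => i _.
by rewrite sqrtr_ge0 ler_wsqrtr ?potential_le_bound.
Qed.
End EdgeCover.
End JoinBound.

Lemma le_powR_half (R : realType) (x c : R) n : 0 <= x -> 0 <= c ->
  x ^+ 2 <= c ^+ n -> x <= c `^ (n%:R / 2).
Proof.
move=> x0 c0 le_x2; rewrite -(@ler_pXn2r _ 2) ?nnegrE ?powR_ge0 //.
by rewrite -[X in _ <= X]powR_mulrn ?powR_ge0 // -powRrM divfK ?pnatr_eq0 // powR_mulrn.
Qed.

Theorem mainTheorem5 (R : realType) (V D Rel : finType) (src dst : Rel -> V)
  (inst : Rel -> {set D * D}) (N : nat) (U : {set V}) :
  (forall r, src r != dst r) ->
  (1 <= N)%N ->
  (forall r, #|inst r| <= N)%N ->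
  (* (1) every attribute outside U is joined by a relation to an attribute in U *)
  (forall y, y \notin U ->
     exists r, (src r \in U /\ dst r = y) \/ (dst r \in U /\ src r = y)) ->
  (* (2) every relation R(X,Y) with X in U, Y not in U is light in X *)
  (forall r, (src r \in U -> dst r \notin U -> light R src dst inst N r (src r)) /\
             (dst r \in U -> src r \notin U -> light R src dst inst N r (dst r))) ->
  (#|joinT src dst inst U|%:R : R) <= AGM R src dst N.
Proof.
move=> src_neq_dst N_ge1 inst_small outside_linked light_inst.
have [S [F [_ S_stable F_adj F_cover card_FS]]] :=
  bipartite_edge_cover (@cover_adjC V Rel src dst) (@cover_adj_side V Rel src dst)
                       (@cover_no_isolated V Rel src dst U).
apply: le_trans (powR_le_AGM N_ge1 (cover_weight_packing R S_stable)).
rewrite sum_cover_weight le_powR_half ?ler0n //.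
have := card_joinT_sqr_le src_neq_dst N_ge1 inst_small outside_linked light_inst F_adj F_cover.
by move/le_trans; apply; rewrite ler_weXn2l ?ler1n.
Qed.
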